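(* Consider the repeated service game described in the context, with $t>0$, $\tau\in(0,t)$, $c>0$, $p>c$, $d\in(0,1)$, $w\in(0,1)$, and a strictly decreasing continuous utility $\Gamma:[0,1]\to(0,\infty)$ with $\Gamma(0)>p$. If the cooperation conditions hold, then $$d<\min\left\{1-\frac{c}{p},\ \Gamma^{-1}(p)\right\}\qquad\text{and}\qquad w>\max\left\{\frac{1-\tau/t}{p/c-\tau/t},\ 1-\frac{1-p/\Gamma(0)}{\tau/t}\right\}.$$
   Context: A service provider (SP) and a client interact in rounds of duration $t>0$. The parameters are: trial time $\tau$, SP cost per unit time $c$, price per unit time $p$, channel outage probability $d$, continuation probability (cooperation willingness) $w$, and a client utility function $\Gamma$. When both players use COOP, the long-term payoffs are $$\Pi_s^{\mathrm C}=\frac{(1-d)(p-c)t-dc\tau}{1-(1-d)w},\qquad \Pi_c^{\mathrm C}=\frac{(1-d)(\Gamma(d)-p)t+d\Gamma(d)\tau}{1-(1-d)w}.$$ For an integer $j\ge 2$, the long-term payoff of a player using the defect-and-recover-after-$j$-rounds strategy JDEF$_j$ against COOP is: - for the SP, $$\Pi_s^{(j)}=\frac{(1-d)\big(pt-c\tau-w^{j-1}c(t-\tau)\big)-dc\tau}{1-(1-d)w^{j}};$$ - for the client, $$\Pi_c^{(j)}=\frac{(1-d)\big(\Gamma(d)\tau+w^{j-1}(\Gamma(d)(t-\tau)-pt)\big)+d\Gamma(d)\tau}{1-(1-d)w^{j}}.$$ The cooperation conditions hold when both of the following hold: - $\Pi_s^{\mathrm C}\ge\Pi_s^{(j)}$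 for all integers $j\ge2$; - $\Pi_c^{\mathrm C}\ge \Pi_c^{(j)}$ for all integers $j\ge 2$. For $0<y\le\Gamma(0)$, we write $\Gamma^{-1}(y):=\sup\{x\in[0,1]:\Gamma(x)\ge y\}$. This coincides with the inverse of $\Gamma$ whenever $y$ is in the range of $\Gamma$. *)

From HB Require Import structures.
From mathcomp Require Import all_boot all_order all_algebra.
From mathcomp Require Import all_classical all_reals all_analysis.
Set Implicit Arguments. Unset Strict Implicit. Unset Printing Implicit Defensive.
Import Order.TTheory GRing.Theory Num.Theory.
Local Open Scope classical_set_scope.
Local Open Scope ring_scope.

Section Payoffs.
Variable R : realType.

(* Long-term payoffs when both players use COOP. *)
Definition PiC_s (t c p d w tau : R) : R :=
  ((1 - d) * (p - c) * t - d * c * tau) / (1 - (1 - d) * w).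
Definition PiC_c (Gamma : R -> R) (t p d w tau : R) : R :=
  ((1 - d) * (Gamma d - p) * t + d * Gamma d * tau) / (1 - (1 - d) * w).

(* Long-term payoff of JDEF_j against COOP. *)
Definition Pij_s (t c p d w tau : R) (j : nat) : R :=
  ((1 - d) * (p * t - c * tau - w ^+ j.-1 * c * (t - tau)) - d * c * tau)
  / (1 - (1 - d) * w ^+ j).
Definition Pij_c (Gamma : R -> R) (t p d w tau : R) (j : nat) : R :=
  ((1 - d) * (Gamma d * tau + w ^+ j.-1 * (Gamma d * (t - tau) - p * t))
     + d * Gamma d * tau)
  / (1 - (1 - d) * w ^+ j).

Definition cooperation_conditions (Gamma : R -> R) (t c p d w tau : R) : Prop :=
  (forall j : nat, (2 <= j)%N -> Pij_s t c p d w tau j <= PiC_s t c p d w tau) /\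
  (forall j : nat, (2 <= j)%N -> Pij_c Gamma t p d w tau j <= PiC_c Gamma t p d w tau).

Definition Gamma_inv (Gamma : R -> R) (y : R) : R :=
  sup [set x : R | 0 <= x <= 1 /\ y <= Gamma x].

End Payoffs.

From HB Require Import structures.
From mathcomp Require Import all_boot all_order all_algebra.
From mathcomp Require Import all_classical all_reals all_analysis.
From mathcomp Require Import ring lra.
Set Implicit Arguments. Unset Strict Implicit. Unset Printing Implicit Defensive.
Import Order.TTheory GRing.Theory Num.Theory numFieldNormedType.Exports.
Local Open Scope classical_set_scope.
Local Open Scope ring_scope.

(* Only the one-round defection JDEF_2 is needed.  Against it, the SP's
   cooperation condition is equivalent to c (t - tau) <= w ((1 - d) p t - c tau)
   and the client's to p t <= Gamma(d) (t - tau + w tau).  The first forces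
   c < (1 - d) p and, since d > 0, c (t - tau) < w (p t - c tau); the second
   forces p < Gamma(d) < Gamma(0), hence d < Gamma^-1(p) by continuity, and
   p t < Gamma(0) (t - tau + w tau). *)

Section DefectionForTwoRounds.
Variables (R : realType) (t c p d w tau : R) (Gamma : R -> R).
Hypotheses (d_gt0 : 0 < d) (d_lt1 : d < 1) (w_gt0 : 0 < w) (w_lt1 : w < 1).

Lemma continuation_denom_gt0 (n : nat) : 0 < 1 - (1 - d) * w ^+ n.
Proof.
have shrink : (1 - d) * w ^+ n <= 1 - d.
  by rewrite ler_piMr ?subr_ge0 ?exprn_ile1 ?ltW.
by rewrite subr_gt0 (le_lt_trans shrink) // ltrBlDr ltrDl.
Qed.

Let denom_neq0 (n : nat) : 1 - (1 - d) * w ^+ n != 0.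
Proof. exact/lt0r_neq0/continuation_denom_gt0. Qed.

Let gain_factor_gt0 :
  0 < (1 - d) * (1 - w) / ((1 - (1 - d) * w ^+ 1) * (1 - (1 - d) * w ^+ 2)).
Proof.
by rewrite divr_gt0 ?mulr_gt0 ?continuation_denom_gt0 ?subr_gt0.
Qed.

Lemma PiC_s_sub_Pij_s2 :
  PiC_s t c p d w tau - Pij_s t c p d w tau 2 =
  (1 - d) * (1 - w) / ((1 - (1 - d) * w ^+ 1) * (1 - (1 - d) * w ^+ 2)) *
  (w * ((1 - d) * p * t - c * tau) - c * (t - tau)).
Proof.
by rewrite /PiC_s /Pij_s; field; rewrite denom_neq0 -[w]expr1 denom_neq0.
Qed.

Lemma PiC_c_sub_Pij_c2 :
  PiC_c Gamma t p d w tau - Pij_c Gamma t p d w tau 2 =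
  (1 - d) * (1 - w) / ((1 - (1 - d) * w ^+ 1) * (1 - (1 - d) * w ^+ 2)) *
  (Gamma d * (t - tau + w * tau) - p * t).
Proof.
by rewrite /PiC_c /Pij_c; field; rewrite denom_neq0 -[w]expr1 denom_neq0.
Qed.

Lemma sp_coop2E :
  (Pij_s t c p d w tau 2 <= PiC_s t c p d w tau) =
  (c * (t - tau) <= w * ((1 - d) * p * t - c * tau)).
Proof.
by rewrite -subr_ge0 PiC_s_sub_Pij_s2 (pmulr_rge0 _ gain_factor_gt0) subr_ge0.
Qed.

Lemma client_coop2E :
  (Pij_c Gamma t p d w tau 2 <= PiC_c Gamma t p d w tau) =
  (p * t <= Gamma d * (t - tau + w * tau)).
Proof.
by rewrite -subr_ge0 PiC_c_sub_Pij_c2 (pmulr_rge0 _ gain_factor_gt0) subr_ge0.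
Qed.

End DefectionForTwoRounds.

Lemma sp_outage_bound (R : realType) (t c p d w tau : R) :
  0 < t -> tau < t -> 0 < c -> c < p -> 0 < w -> w < 1 ->
  c * (t - tau) <= w * ((1 - d) * p * t - c * tau) ->
  d < 1 - c / p.
Proof.
move=> t_gt0 tau_lt_t c_gt0 c_lt_p w_gt0 w_lt1 sp_coop.
have p_gt0 : 0 < p by lra.
have loss_gt0 : 0 < c * (t - tau) by rewrite mulr_gt0 ?subr_gt0.
have : c * t < (1 - d) * p * t by nra.
rewrite ltr_pM2r // -ltr_pdivrMr // => ?; lra.
Qed.

Lemma sp_willingness_bound (R : realType) (t c p d w tau : R) :
  0 < t -> 0 < tau -> 0 < c -> c < p -> tau < t -> 0 < d -> 0 < w ->
  c * (t - tau) <= w * ((1 - d) * p * t - c * tau) ->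
  (1 - tau / t) / (p / c - tau / t) < w.
Proof.
move=> t_gt0 tau_gt0 c_gt0 c_lt_p tau_lt_t d_gt0 w_gt0 sp_coop.
have net_gt0 : 0 < p * t - c * tau by nra.
rewrite -subr_gt0.
have -> : w - (1 - tau / t) / (p / c - tau / t) =
          (w * (p * t - c * tau) - c * (t - tau)) / (p * t - c * tau).
  by field; rewrite !lt0r_neq0 //; lra.
have outage_gain : 0 < w * (d * p * t) by rewrite !mulr_gt0 //; lra.
by rewrite divr_gt0 // subr_gt0; lra.
Qed.

Lemma client_price_bound (R : realType) (t p w tau G : R) :
  0 < tau -> tau < t -> 0 < p -> 0 < w -> w < 1 ->
  p * t <= G * (t - tau + w * tau) -> p < G.
Proof.
move=> tau_gt0 tau_lt_t p_gt0 w_gt0 w_lt1 client_coop.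
have wtau_lt : w * tau < tau by rewrite gtr_pMl.
have span_gt0 : 0 < t - tau + w * tau by rewrite addr_gt0 ?mulr_gt0 ?subr_gt0.
have pt_gt0 : 0 < p * t by rewrite mulr_gt0 //; lra.
have G_gt0 : 0 < G by rewrite -(pmulr_lgt0 _ span_gt0) (lt_le_trans pt_gt0).
have : G * (t - tau + w * tau) < G * t by rewrite ltr_pM2l //; lra.
by move=> /(le_lt_trans client_coop); rewrite ltr_pM2r //; lra.
Qed.

Lemma client_willingness_bound (R : realType) (t p w tau G : R) :
  0 < t -> 0 < tau -> 0 < G -> p * t < G * (t - tau + w * tau) ->
  1 - (1 - p / G) / (tau / t) < w.
Proof.
move=> t_gt0 tau_gt0 G_gt0 client_coop; rewrite -subr_gt0.
have -> : w - (1 - (1 - p / G) / (tau / t)) =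
          (G * (t - tau + w * tau) - p * t) / (G * tau).
  by field; rewrite !lt0r_neq0.
by rewrite divr_gt0 ?mulr_gt0 ?subr_gt0.
Qed.

Lemma lt_Gamma_inv (R : realType) (Gamma : R -> R) (x y : R) :
  {within `[0, 1], continuous Gamma} -> 0 < x < 1 -> y < Gamma x ->
  x < Gamma_inv Gamma y.
Proof.
move=> Gamma_cont /andP[x_gt0 x_lt1] y_lt.
have [Gamma_cont_in _ _] := (continuous_within_itvP Gamma ltr01).1 Gamma_cont.
have x_in : x \in `]0, 1[ by rewrite in_itv /= x_gt0 x_lt1.
have [e e_gt0 near_x] :=
  (nbhs_ballP x _).1 (cvgr_gt (Gamma x) (Gamma_cont_in x x_in) y y_lt).
set m := Num.min e (1 - x).
have m_gt0 : 0 < m by rewrite lt_min e_gt0 subr_gt0.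
have m_le_e : m <= e by rewrite ge_min lexx.
have m_le_1x : m <= 1 - x by rewrite ge_min lexx orbT.
have h_gt0 : 0 < m / 2 by rewrite divr_gt0.
have y_lt_h : y < Gamma (x + m / 2).
  apply: near_x; rewrite /ball /= opprD addrA subrr sub0r normrN.
  by rewrite gtr0_norm //; lra.
have ub : has_ubound [set z : R | 0 <= z <= 1 /\ y <= Gamma z].
  by exists 1 => z /= [/andP[_ ?] _].
have x_h_in : [set z : R | 0 <= z <= 1 /\ y <= Gamma z] (x + m / 2).
  by split; [apply/andP; split; lra | exact: ltW].
apply: (lt_le_trans _ (ub_le_sup ub x_h_in)); lra.
Qed.

Theorem corollary3 (R : realType) (t tau c p d w : R) (Gamma : R -> R) :
  0 < t -> 0 < tau -> tau < t -> 0 < c -> c < p ->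
  0 < d -> d < 1 -> 0 < w -> w < 1 ->
  {within `[0%R, 1%R], continuous Gamma} ->
  (forall x y : R, 0 <= x -> x < y -> y <= 1 -> Gamma y < Gamma x) ->
  (forall x : R, 0 <= x <= 1 -> 0 < Gamma x) ->
  p < Gamma 0 ->
  cooperation_conditions Gamma t c p d w tau ->
  (d < Num.min (1 - c / p) (Gamma_inv Gamma p) /\
   Num.max ((1 - tau / t) / (p / c - tau / t))
           (1 - (1 - p / Gamma 0) / (tau / t)) < w).
Proof.
move=> t_gt0 tau_gt0 tau_lt_t c_gt0 c_lt_p d_gt0 d_lt1 w_gt0 w_lt1
  Gamma_cont Gamma_decr _ p_lt_G0 [sp_coop client_coop].
move: (sp_coop 2%N isT) (client_coop 2%N isT).
rewrite sp_coop2E // client_coop2E // => sp2 client2.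
have p_gt0 : 0 < p by lra.
have p_lt_Gd := client_price_bound tau_gt0 tau_lt_t p_gt0 w_gt0 w_lt1 client2.
have Gd_lt_G0 : Gamma d < Gamma 0 by apply: Gamma_decr; lra.
have d_lt_sp := sp_outage_bound t_gt0 tau_lt_t c_gt0 c_lt_p w_gt0 w_lt1 sp2.
have w_gt_sp :=
  sp_willingness_bound t_gt0 tau_gt0 c_gt0 c_lt_p tau_lt_t d_gt0 w_gt0 sp2.
have d_lt_client : d < Gamma_inv Gamma p.
  by apply: lt_Gamma_inv => //; rewrite d_gt0 d_lt1.
have span_gt0 : 0 < t - tau + w * tau by rewrite addr_gt0 ?mulr_gt0 ?subr_gt0.
have w_gt_client : 1 - (1 - p / Gamma 0) / (tau / t) < w.
  apply: client_willingness_bound => //; first by lra.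
  by rewrite (le_lt_trans client2) // ltr_pM2r.
by rewrite lt_min gt_max d_lt_sp d_lt_client w_gt_sp w_gt_client.
Qed.
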